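(* Let $u_0\in\ell^\infty_+(\mathbb{Z})$ with $\frac12\le u_0\le1$, let $\Psi_*$ be a creation operator with jump sequence $d\le L$, and $G_\beta(u)=\frac{\beta}{|\beta|}u^\beta$. 1. Let $\beta<0$ and let $u$ be a classical solution of $\partial_tu=\Delta G_\beta(u)$, $u(0)=\Psi_*u_0$, with $u\le1$ and $u(t,\cdot)\ge c(1\wedge t^{\frac1{1-\beta}})$ for all $t\ge0$, where $c>0$ depends only on $\beta,L$. Then for every $T>0$ there is $C=C(\beta,L,T)$ with $|u(t_2,k)-u(t_1,k)|\le C|t_2-t_1|^{\frac1{1-\beta}}$ for all $t_1,t_2\in[0,T]$, $k\in\mathbb{Z}$. 2. Let $\beta\in(0,1]$ and let $u$ be a classical solution of the same problem with $0\le u\le1$. Then $|u(t_2,k)-u(t_1,k)|\le4|t_2-t_1|$ for all $t_1,t_2\ge0$, $k\in\mathbb{Z}$.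
   Context: $\Delta v(k)=v(k-1)-2v(k)+v(k+1)$. Creation operator: for strictly increasing $\Psi:\mathbb{Z}\to\mathbb{Z}$, $\Psi_*x(\Psi(k))=x(k)$, $\Psi_*x(l)=0$ off $\Psi(\mathbb{Z})$; jump sequence = gaps $\Psi(k+1)-\Psi(k)-1$. Classical solution: $u\in C^0([0,\infty);\ell^\infty_+(\mathbb{Z}))$ with the initial datum, $u(\cdot,k)\in C^1((0,\infty))$ positive and satisfying the equation pointwise. *)

From Stdlib Require Import Reals ZArith ClassicalEpsilon.
From Coquelicot Require Import Coquelicot.
Open Scope R_scope.

Definition lap (v : Z -> R) (k : Z) : R :=
  v (k - 1)%Z - 2 * v k + v (k + 1)%Z.

(* nonnegative power with the convention 0^a = 0 (used for a > 0, x >= 0);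
   Stdlib's Rpower 0 a = 1, which is why we do not use it at 0. *)
Definition powp (x a : R) : R :=
  if Req_EM_T x 0 then 0 else Rpower x a.

Definition Gb (beta x : R) : R := (beta / Rabs beta) * Rpower x beta.

Definition strictly_increasing (Psi : Z -> Z) : Prop :=
  forall k l : Z, (k < l)%Z -> (Psi k < Psi l)%Z.

(* creation operator: (Psi_* x)(Psi k) = x k, and 0 off the image of Psi *)
Definition creation (Psi : Z -> Z) (x : Z -> R) (l : Z) : R :=
  match excluded_middle_informative (exists k, Psi k = l) with
  | left H => x (proj1_sig (constructive_indefinite_description _ H))
  | right _ => 0
  end.

Definition jump (Psi : Z -> Z) (k : Z) : Z := (Psi (k + 1) - Psi k - 1)%Z.

Definition linf_plus (v : Z -> R) : Prop :=
  (forall k, 0 <= v k) /\ exists M, forall k, Rabs (v k) <= M.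

Definition classical_solution (beta : R) (init : Z -> R) (u : R -> Z -> R) : Prop :=
  (* u in C^0([0,oo); l^infty_+(Z)) *)
  (forall t, 0 <= t -> linf_plus (u t)) /\
  (forall t, 0 <= t -> forall eps, 0 < eps -> exists delta, 0 < delta /\
      forall s, 0 <= s -> Rabs (s - t) < delta ->
        forall k, Rabs (u s k - u t k) <= eps) /\
  (forall k, u 0 k = init k) /\
  (forall t k, 0 < t -> 0 < u t k) /\
  (forall k t, 0 < t ->
      ex_derive (fun s => u s k) t /\
      continuous (fun s => Derive (fun s' => u s' k) s) t) /\
  (forall k t, 0 < t ->
      Derive (fun s => u s k) t = lap (fun j => Gb beta (u t j)) k).

From Stdlib Require Import Reals ZArith Lra.
From Coquelicot Require Import Coquelicot.
Open Scope R_scope.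

(* Both estimates bound the time derivative: [d/dt u(t,k) = Δ G_β(u(t))(k)] is at most
   [4 sup_j u(t,j)^β] in absolute value.  For [0 < β] and [u <= 1] this is at most 4.
   For [β < 0] the lower bound [u >= c' t^α], [α = 1/(1-β)], gives [4 c'^β t^(α-1)],
   whose primitive [(4 c'^β / α) t^α] is α-Hölder because [t ↦ t^α] is subadditive.
   Continuity of [u] at [t = 0] extends the bounds from [(0,T]] to [[0,T]]. *)

Lemma exp_le_exp x y : x <= y -> exp x <= exp y.
Proof. intros [H|H]; [left; apply exp_increasing | subst]; lra. Qed.

Lemma Rpower_le_1 x a : 0 <= a -> 0 < x <= 1 -> Rpower x a <= 1.
Proof.
  intros Ha Hx. rewrite <- exp_0. apply exp_le_exp.
  assert (ln x <= 0) by (rewrite <- ln_1; apply ln_le; lra). nra.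
Qed.

Lemma Rpower_le_antimono x y b : b <= 0 -> 0 < x <= y -> Rpower y b <= Rpower x b.
Proof.
  intros Hb Hxy. apply exp_le_exp.
  assert (ln x <= ln y) by (apply ln_le; lra). nra.
Qed.

Lemma Rpower_ge_base x a : 0 < a <= 1 -> 0 < x <= 1 -> x <= Rpower x a.
Proof.
  intros Ha Hx. unfold Rpower. rewrite <- (exp_ln x) at 1 by lra.
  apply exp_le_exp. assert (ln x <= 0) by (rewrite <- ln_1; apply ln_le; lra). nra.
Qed.

(* Writing [a = θ b], [b - a = (1-θ) b] reduces this to [θ^α + (1-θ)^α >= θ + (1-θ) = 1]. *)
Lemma Rpower_sub_le a b α : 0 < α <= 1 -> 0 < a < b ->
  Rpower b α - Rpower a α <= Rpower (b - a) α.
Proof.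
  intros Hα Hab.
  assert (Hunit : forall x, 0 < x <= b -> 0 < x / b <= 1).
  { intros x Hx. split; [apply Rdiv_lt_0_compat; lra|].
    apply Rmult_le_reg_r with b; [lra|]. unfold Rdiv.
    rewrite Rmult_assoc, Rinv_l; lra. }
  assert (Hθ := Hunit a ltac:(lra)). assert (Hθ' := Hunit (b - a) ltac:(lra)).
  assert (Ea : Rpower a α = Rpower (a / b) α * Rpower b α).
  { rewrite Rpower_mult_distr by lra. f_equal. field. lra. }
  assert (Eba : Rpower (b - a) α = Rpower ((b - a) / b) α * Rpower b α).
  { rewrite Rpower_mult_distr by lra. f_equal. field. lra. }
  assert (Hsum : a / b + (b - a) / b = 1) by (field; lra).
  pose proof (Rpower_ge_base _ α Hα Hθ).
  pose proof (Rpower_ge_base _ α Hα Hθ').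
  assert (0 < Rpower b α) by apply exp_pos.
  rewrite Ea, Eba. nra.
Qed.

Lemma powp_pos x a : 0 < x -> powp x a = Rpower x a.
Proof. intros Hx. unfold powp. destruct (Req_EM_T x 0); lra. Qed.

Lemma powp_0 a : powp 0 a = 0.
Proof. unfold powp. destruct (Req_EM_T 0 0); lra. Qed.

Lemma Rdiv_Rmax_1_le_Rmin x P : 0 <= x <= P -> x / Rmax 1 P <= Rmin 1 x.
Proof.
  intros Hx. pose proof (Rmax_l 1 P). pose proof (Rmax_r 1 P).
  assert (E : x / Rmax 1 P * Rmax 1 P = x) by (field; lra).
  set (y := x / Rmax 1 P) in E |- *.
  apply Rmin_glb; nra.
Qed.

(* Apply the mean value theorem to [f - g] and to [f + g]. *)
Lemma Rabs_sub_le_of_derive_le (f g df dg : R -> R) a b : a <= b ->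
  (forall t, a <= t <= b -> is_derive f t (df t)) ->
  (forall t, a <= t <= b -> is_derive g t (dg t)) ->
  (forall t, a <= t <= b -> Rabs (df t) <= dg t) ->
  Rabs (f b - f a) <= g b - g a.
Proof.
  intros [Hab|<-] Hf Hg Hdf; [|rewrite !Rminus_diag, Rabs_R0; lra].
  destruct (MVT_cor2 (fun t => f t - g t) (fun t => df t - dg t) a b Hab)
    as [c1 [E1 Hc1]].
  { intros t Ht. apply is_derive_Reals, (is_derive_minus f g); auto. }
  destruct (MVT_cor2 (fun t => f t + g t) (fun t => df t + dg t) a b Hab)
    as [c2 [E2 Hc2]].
  { intros t Ht. apply is_derive_Reals, (is_derive_plus f g); auto. }
  pose proof (Hdf c1 ltac:(lra)) as B1. pose proof (Hdf c2 ltac:(lra)) as B2.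
  apply Rabs_le_between in B1, B2. apply Rabs_le_between. nra.
Qed.

Definition right_continuous_at (f : R -> R) (a : R) : Prop :=
  forall eps, 0 < eps -> exists delta, 0 < delta /\
    forall s, a < s < a + delta -> Rabs (f s - f a) <= eps.

Lemma Rabs_sub_le_of_right_continuous f a b B : a < b ->
  right_continuous_at f a ->
  (forall s, a < s < b -> Rabs (f b - f s) <= B) ->
  Rabs (f b - f a) <= B.
Proof.
  intros Hab Hcont Hbound. apply Rle_plus_epsilon. intros eps Heps.
  destruct (Hcont eps Heps) as [delta [Hdelta Hnear]].
  set (s := a + Rmin (delta / 2) ((b - a) / 2)).
  assert (Hs : a < s < a + delta /\ s < b).
  { pose proof (Rmin_l (delta / 2) ((b - a) / 2)).
    pose proof (Rmin_r (delta / 2) ((b - a) / 2)).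
    pose proof (Rmin_pos (delta / 2) ((b - a) / 2) ltac:(lra) ltac:(lra)).
    unfold s. lra. }
  replace (f b - f a) with ((f b - f s) + (f s - f a)) by ring.
  eapply Rle_trans; [apply Rabs_triang|].
  pose proof (Hbound s ltac:(lra)). pose proof (Hnear s ltac:(lra)). lra.
Qed.

Lemma Rabs_sub_le_sym (f w : R -> R) (P : R -> Prop) : 0 <= w 0 ->
  (forall a b, P a -> P b -> a < b -> Rabs (f b - f a) <= w (b - a)) ->
  forall a b, P a -> P b -> Rabs (f b - f a) <= w (Rabs (b - a)).
Proof.
  intros Hw0 Hlt a b Ha Hb.
  destruct (Rtotal_order a b) as [Hab|[<-|Hba]].
  - rewrite (Rabs_pos_eq (b - a)) by lra. auto.
  - rewrite !Rminus_diag, Rabs_R0. exact Hw0.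
  - rewrite Rabs_minus_sym, (Rabs_minus_sym b), (Rabs_pos_eq (a - b)) by lra. auto.
Qed.

Lemma Rabs_sub_le_modulus (f g dg w : R -> R) T :
  right_continuous_at f 0 ->
  (forall t, 0 < t <= T -> ex_derive f t) ->
  (forall t, 0 < t <= T -> is_derive g t (dg t)) ->
  (forall t, 0 < t <= T -> Rabs (Derive f t) <= dg t) ->
  (forall a b, 0 < a -> a < b <= T -> g b - g a <= w (b - a)) ->
  (forall x y, 0 < x <= y -> w x <= w y) ->
  0 <= w 0 ->
  forall t1 t2, 0 <= t1 <= T -> 0 <= t2 <= T ->
    Rabs (f t2 - f t1) <= w (Rabs (t2 - t1)).
Proof.
  intros Hcont Hf Hg Hdf Hgw Hmono Hw0.
  assert (Hinc : forall a b, 0 < a -> a < b <= T -> Rabs (f b - f a) <= w (b - a)).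
  { intros a b Ha Hab. eapply Rle_trans; [|apply Hgw; lra].
    apply (Rabs_sub_le_of_derive_le f g (Derive f) dg); [lra| | |]; intros t Ht.
    - apply Derive_correct, Hf. lra.
    - apply Hg. lra.
    - apply Hdf. lra. }
  apply (Rabs_sub_le_sym f w (fun t => 0 <= t <= T) Hw0).
  intros a b Ha Hb Hab. destruct (Req_dec a 0) as [->|Ha0]; [|apply Hinc; lra].
  apply Rabs_sub_le_of_right_continuous; [lra|exact Hcont|].
  intros s Hs. eapply Rle_trans; [apply Hinc; lra|]. apply Hmono. lra.
Qed.

Lemma Rabs_lap_le (v : Z -> R) A k : (forall j, Rabs (v j) <= A) -> Rabs (lap v k) <= 4 * A.
Proof.
  intros Hv. unfold lap.
  pose proof (Hv (k - 1)%Z) as H1. pose proof (Hv k) as H2. pose proof (Hv (k + 1)%Z) as H3.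
  apply Rabs_le_between in H1, H2, H3. apply Rabs_le_between. lra.
Qed.

Lemma Rabs_Gb beta x : beta <> 0 -> Rabs (Gb beta x) = Rpower x beta.
Proof.
  intros Hbeta. unfold Gb.
  rewrite Rabs_mult, Rabs_div, Rabs_Rabsolu, Rdiv_diag by (apply Rabs_no_R0; exact Hbeta).
  rewrite Rmult_1_l. apply Rabs_pos_eq, Rlt_le, exp_pos.
Qed.

Section ClassicalSolution.

Variables (beta : R) (init : Z -> R) (u : R -> Z -> R).
Hypothesis Hsol : classical_solution beta init u.

Lemma classical_solution_right_continuous k : right_continuous_at (fun t => u t k) 0.
Proof.
  destruct Hsol as [_ [Hcont _]]. intros eps Heps.
  destruct (Hcont 0 (Rle_refl 0) eps Heps) as [delta [Hdelta Hnear]].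
  exists delta. split; [exact Hdelta|]. intros s Hs.
  apply Hnear; [lra|]. rewrite Rminus_0_r, Rabs_pos_eq; lra.
Qed.

Lemma classical_solution_modulus k T (h g w : R -> R) :
  (forall t j, 0 < t <= T -> Rabs (Gb beta (u t j)) <= h t) ->
  (forall t, 0 < t <= T -> is_derive g t (4 * h t)) ->
  (forall a b, 0 < a -> a < b <= T -> g b - g a <= w (b - a)) ->
  (forall x y, 0 < x <= y -> w x <= w y) ->
  0 <= w 0 ->
  forall t1 t2, 0 <= t1 <= T -> 0 <= t2 <= T ->
    Rabs (u t2 k - u t1 k) <= w (Rabs (t2 - t1)).
Proof.
  intros HG Hg. destruct Hsol as [_ [_ [_ [_ [HC1 Heq]]]]].
  apply (Rabs_sub_le_modulus _ g (fun t => 4 * h t));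
    auto using classical_solution_right_continuous.
  - intros t Ht. apply HC1. lra.
  - intros t Ht. rewrite Heq by lra. apply Rabs_lap_le. intros j. apply HG. exact Ht.
Qed.

End ClassicalSolution.

Theorem classical_solution_lipschitz beta init u : 0 < beta ->
  classical_solution beta init u ->
  (forall t k, 0 <= t -> u t k <= 1) ->
  forall t1 t2 k, 0 <= t1 -> 0 <= t2 -> Rabs (u t2 k - u t1 k) <= 4 * Rabs (t2 - t1).
Proof.
  intros Hbeta Hsol Hle1 t1 t2 k Ht1 Ht2.
  pose proof Hsol as [_ [_ [_ [Hpos _]]]].
  pose proof (Rmax_l t1 t2). pose proof (Rmax_r t1 t2).
  apply (classical_solution_modulus beta init u Hsol k (Rmax t1 t2)
           (fun _ => 1) (fun t => 4 * t) (fun x => 4 * x)); try (intros; lra).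
  - intros t j Ht. rewrite Rabs_Gb by lra. apply Rpower_le_1; [lra|].
    split; [apply Hpos | apply Hle1]; lra.
  - intros t _. auto_derive; [exact I | ring].
Qed.

Theorem classical_solution_holder beta c T : beta < 0 -> 0 < c ->
  exists C, forall init u,
    classical_solution beta init u ->
    (forall t k, 0 <= t -> c * Rmin 1 (powp t (1 / (1 - beta))) <= u t k) ->
    forall t1 t2 k, 0 <= t1 <= T -> 0 <= t2 <= T ->
      Rabs (u t2 k - u t1 k) <= C * powp (Rabs (t2 - t1)) (1 / (1 - beta)).
Proof.
  intros Hbeta Hc.
  set (α := 1 / (1 - beta)).
  assert (Hα : 0 < α <= 1).
  { split; [apply Rdiv_lt_0_compat; lra|].
    apply Rmult_le_reg_r with (1 - beta); [lra|]. unfold α, Rdiv.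
    rewrite Rmult_assoc, Rinv_l; lra. }
  assert (Hαβ : α * beta = α - 1) by (unfold α; field; lra).
  set (M := Rmax 1 (Rpower T α)).
  assert (HM : 1 <= M) by apply Rmax_l.
  (* On [(0,T]], [c min(1, t^α) >= (c / M) t^α]. *)
  set (c' := c / M).
  assert (Hc' : 0 < c') by (apply Rdiv_lt_0_compat; lra).
  set (C := 4 * Rpower c' beta / α).
  assert (HC : 0 <= C).
  { apply Rlt_le, Rdiv_lt_0_compat; [|lra]. pose proof (exp_pos (beta * ln c')). unfold Rpower. lra. }
  exists C. intros init u Hsol Hlow t1 t2 k Ht1 Ht2.
  assert (Hlow' : forall t j, 0 < t <= T -> c' * Rpower t α <= u t j).
  { intros t j Ht. eapply Rle_trans; [|apply Hlow; lra]. rewrite powp_pos by lra.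
    replace (c' * Rpower t α) with (c * (Rpower t α / M)) by (unfold c'; field; lra).
    apply Rmult_le_compat_l; [lra|]. apply Rdiv_Rmax_1_le_Rmin.
    split; [apply Rlt_le, exp_pos | apply Rle_Rpower_l; lra]. }
  apply (classical_solution_modulus beta init u Hsol k T
           (fun t => Rpower c' beta * Rpower t (α - 1)) (fun t => C * Rpower t α)
           (fun x => C * powp x α)); auto.
  - intros t j Ht. rewrite Rabs_Gb by lra.
    assert (0 < c' * Rpower t α) by (apply Rmult_lt_0_compat; [lra | apply exp_pos]).
    eapply Rle_trans; [apply Rpower_le_antimono; [lra | split; [|apply Hlow']]; auto|].
    rewrite <- Rpower_mult_distr, Rpower_mult, Hαβ by (auto; apply exp_pos). lra.
  - intros t Ht.
    replace (4 * (Rpower c' beta * Rpower t (α - 1))) with (C * (α * Rpower t (α - 1)))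
      by (unfold C; field; lra).
    apply is_derive_scal, is_derive_Reals, derivable_pt_lim_power. lra.
  - intros a b Ha Hab. rewrite powp_pos by lra.
    pose proof (Rpower_sub_le a b α Hα ltac:(lra)). nra.
  - intros x y Hxy. rewrite !powp_pos by lra.
    apply Rmult_le_compat_l; [exact HC | apply Rle_Rpower_l; lra].
  - rewrite powp_0. lra.
Qed.

Theorem lemma4p4 :
  (forall (beta : R) (L : Z) (c T : R),
      beta < 0 -> 0 < c -> 0 < T ->
      exists C : R,
        forall (u0 : Z -> R) (Psi : Z -> Z) (u : R -> Z -> R),
          (forall k, 1/2 <= u0 k <= 1) ->
          strictly_increasing Psi ->
          (forall k, (jump Psi k <= L)%Z) ->
          classical_solution beta (creation Psi u0) u ->
          (forall t k, 0 <= t -> u t k <= 1) ->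
          (forall t k, 0 <= t -> c * Rmin 1 (powp t (1 / (1 - beta))) <= u t k) ->
          forall (t1 t2 : R) (k : Z), 0 <= t1 <= T -> 0 <= t2 <= T ->
            Rabs (u t2 k - u t1 k) <= C * powp (Rabs (t2 - t1)) (1 / (1 - beta)))
  /\
  (forall (beta : R) (L : Z) (u0 : Z -> R) (Psi : Z -> Z) (u : R -> Z -> R),
      0 < beta <= 1 ->
      (forall k, 1/2 <= u0 k <= 1) ->
      strictly_increasing Psi ->
      (forall k, (jump Psi k <= L)%Z) ->
      classical_solution beta (creation Psi u0) u ->
      (forall t k, 0 <= t -> 0 <= u t k <= 1) ->
      forall (t1 t2 : R) (k : Z), 0 <= t1 -> 0 <= t2 ->
        Rabs (u t2 k - u t1 k) <= 4 * Rabs (t2 - t1)).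
Proof.
  split.
  - intros beta L c T Hbeta Hc _.
    destruct (classical_solution_holder beta c T Hbeta Hc) as [C HC].
    exists C. intros u0 Psi u _ _ _ Hsol _ Hlow. exact (HC _ u Hsol Hlow).
  - intros beta L u0 Psi u [Hbeta _] _ _ _ Hsol Hu.
    apply (classical_solution_lipschitz beta _ u Hbeta Hsol).
    intros t k Ht. apply Hu, Ht.
Qed.
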